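(* Let $T_0 \in \mathcal{G}(X)$ be fixed. If $\mathcal{R}(Z) \cap \mathcal{G}_{T_0}$ is dense in $\mathcal{G}_{T_0}$, then $\mathcal{S}_{T_0}$ is a first category subset of $\mathcal{G}_{T_0}$.
   Context: Let $(X,m)$ and $(Y,\nu)$ both be the unit interval with Lebesgue measure, and $(Z,\mu) = (X\times Y, m\times\nu)$. For a probability space $W$, $\mathcal{G}(W)$ denotes the set of invertible measure-preserving transformations of $W$, equipped with the weak topology ($T_n \to T$ iff $\mu(T_nE \triangle TE) \to 0$ for every measurable $E$). For $T_0 \in \mathcal{G}(X)$, $\mathcal{G}_{T_0} \subset \mathcal{G}(Z)$ is the set of extensions of $T_0$ through the projection $Z\to X$, i.e. transformations of the form $T(x,y) = (T_0x, T_x y)$ with $T_x \in \mathcal{G}(Y)$; it carries the (relative) weak topology. $T_0$ is also identified with $T_0 \times \mathrm{id}_Y$ on $Z$. A transformation $T$ on a space $W$ is rigid if there is a subsequence $n_k$ with $T^{n_k} \to \mathrm{id}_W$ strongly (as Koopman operators on $L^2(W)$); $\mathcal{R}(Z)$ is the set of rigid transformations of $Z$. $\mathbb{E}(\cdot|X)$ denotes conditional expectation onto the $\sigma$-algebra of sets $B\times Y$ (viewed as functions on $X$). $L^2(Z|X)$ is the space of $f \in L^2(Z)$ with $\|f\|_{L^2(Z|X)} := \mathbb{E}(|f|^2|X)^{1/2} \in L^\infty(X)$. $T\in\mathcal{G}_{T_0}$ is a (strongly) mixing extension of $T_0$ if for all $f,g \in L^2(Z|X)$, $\lim_{n\to\infty}\|\mathbb{E}(T^n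 f\cdot \overline{g}|X) - T_0^n\mathbb{E}(f|X)\,\mathbb{E}(\overline{g}|X)\|_{L^2(X)} = 0$, where $T^n f = f\circ T^n$. $\mathcal{S}_{T_0}$ denotes the set of strongly mixing extensions of $T_0$. *)

From HB Require Import structures.
From mathcomp Require Import all_boot all_order all_algebra.
From mathcomp Require Import all_classical all_reals all_analysis.
Set Implicit Arguments. Unset Strict Implicit. Unset Printing Implicit Defensive.
Import Order.TTheory GRing.Theory Num.Theory.
Import numFieldNormedType.Exports.
Local Open Scope classical_set_scope.
Local Open Scope ring_scope.

(* The spaces.  X = Y = [0,1] with Lebesgue measure, realised inside  *)
(* R (Borel sets) with Lebesgue measure restricted to [0,1];          *)
(* Z = X x Y realised inside R * R with the product measure           *)
(* restricted to [0,1] x [0,1].                                       *)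

Definition Iu (R : realType) : set R := `[0%R, 1%R]%classic.

Definition mI (R : realType) (A : set R) : \bar R :=
  lebesgue_measure (A `&` (@Iu R)).

Definition mZ (R : realType) (A : set (R * R)) : \bar R :=
  ((@lebesgue_measure R) \x (@lebesgue_measure R)) (A `&` ((@Iu R) `*` (@Iu R))).

Definition mnull d (W : measurableType d) (R : realType)
  (mu : set W -> \bar R) (N : set W) : Prop :=
  exists M, measurable M /\ mu M = 0%E /\ N `<=` M.

Definition mpreserving d (W : measurableType d) (R : realType)
  (mu : set W -> \bar R) (T : W -> W) : Prop :=
  measurable_fun setT T /\
  forall A, measurable A -> mu (T @^-1` A) = mu A.

Definition ae_inverse d (W : measurableType d) (R : realType)
  (mu : set W -> \bar R) (T S : W -> W) : Prop :=
  mpreserving mu S /\ mnull mu [set w | S (T w) <> w \/ T (S w) <> w].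

Definition inG d (W : measurableType d) (R : realType)
  (mu : set W -> \bar R) (T : W -> W) : Prop :=
  mpreserving mu T /\ exists S, ae_inverse mu T S.

(* mu(T E) is read through an inverse S of T: T E = S^{-1} E mod 0.   *)

(* basic neighbourhood: mu(T' E triangle T E) < eps for E = Es 0, ..., Es (k-1) *)
Definition wnbhd d (W : measurableType d) (R : realType)
  (mu : set W -> \bar R) (T : W -> W) (k : nat) (Es : nat -> set W) (eps : R)
  : set (W -> W) :=
  [set T' | forall i, (i < k)%N -> let E := Es i in
     exists S S', ae_inverse mu T S /\ ae_inverse mu T' S' /\
       (mu (((S' @^-1` E) `\` (S @^-1` E)) `|` ((S @^-1` E) `\` (S' @^-1` E))) < eps%:E)%E].

Definition wopen d (W : measurableType d) (R : realType)
  (mu : set W -> \bar R) (G U : set (W -> W)) : Prop :=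
  U `<=` G /\
  forall T, U T -> exists (k : nat) (Es : nat -> set W) (eps : R),
    (forall i, (i < k)%N -> measurable (Es i)) /\ (0 < eps)%R /\
    G `&` wnbhd mu T k Es eps `<=` U.

Definition wclosure d (W : measurableType d) (R : realType)
  (mu : set W -> \bar R) (G A : set (W -> W)) : set (W -> W) :=
  [set T | G T /\ forall U, wopen mu G U -> U T -> U `&` A !=set0].

Definition winterior d (W : measurableType d) (R : realType)
  (mu : set W -> \bar R) (G A : set (W -> W)) : set (W -> W) :=
  [set T | exists U, wopen mu G U /\ U T /\ U `<=` A].

Definition wdense d (W : measurableType d) (R : realType)
  (mu : set W -> \bar R) (G A : set (W -> W)) : Prop :=
  G `<=` wclosure mu G (A `&` G).

Definition wnowhere_dense d (W : measurableType d) (R : realType)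
  (mu : set W -> \bar R) (G A : set (W -> W)) : Prop :=
  winterior mu G (wclosure mu G (A `&` G)) = set0.

Definition wfirst_category d (W : measurableType d) (R : realType)
  (mu : set W -> \bar R) (G A : set (W -> W)) : Prop :=
  A `<=` G /\
  exists N : nat -> set (W -> W),
    (forall k, wnowhere_dense mu G (N k)) /\ A `<=` \bigcup_k N k.

Definition GT0 (R : realType) (T0 : R -> R) : set (R * R -> R * R) :=
  [set T | inG (@mZ R) T /\
     exists Tx : R -> R -> R,
       (forall x y, T (x, y) = (T0 x, Tx x y)) /\
       (forall x, inG (@mI R) (Tx x))].

(* Complex-valued functions are represented by pairs (f1, f2) of      *)
(* real functions, f = f1 + i f2.                                     *)

Definition intZ (R : realType) (h : R * R -> R) : \bar R :=
  (\int[(@lebesgue_measure R) \x (@lebesgue_measure R)]_(z in (@Iu R) `*` (@Iu R))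
      (h z)%:E)%E.

Definition intX (R : realType) (h : R -> R) : \bar R :=
  (\int[@lebesgue_measure R]_(x in (@Iu R)) (h x)%:E)%E.

Definition L2Z (R : realType) (f1 f2 : R * R -> R) : Prop :=
  measurable_fun setT f1 /\ measurable_fun setT f2 /\
  (intZ (fun z => (f1 z ^+ 2 + f2 z ^+ 2)%R) < +oo)%E.

(* E(h | X) for real h, as a function on X: x |-> int_Y h(x,y) dnu(y) *)
Definition condX (R : realType) (h : R * R -> R) (x : R) : R :=
  Rintegral (@lebesgue_measure R) ((@Iu R)) (fun y => h (x, y)).

Definition L2ZX (R : realType) (f1 f2 : R * R -> R) : Prop :=
  measurable_fun setT f1 /\ measurable_fun setT f2 /\
  exists C : R, {ae @lebesgue_measure R, forall x, (@Iu R) x ->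
    (\int[@lebesgue_measure R]_(y in (@Iu R))
        (f1 (x, y) ^+ 2 + f2 (x, y) ^+ 2)%R%:E <= C%:E)%E}.

(* T^{n_k} -> id strongly on L^2(Z) (Koopman operators f |-> f o T^n) *)
Definition rigid (R : realType) (T : R * R -> R * R) : Prop :=
  exists n : nat -> nat, (forall k, (n k < n k.+1)%N) /\
    forall f1 f2, L2Z f1 f2 ->
      (fun k => intZ (fun z => (f1 (iter (n k) T z) - f1 z) ^+ 2 +
                              (f2 (iter (n k) T z) - f2 z) ^+ 2))
        @ \oo --> 0%E.

Definition RZ (R : realType) : set (R * R -> R * R) :=
  [set T | inG (@mZ R) T /\ rigid T].

(* || E(T^n f . conj g | X) - T0^n E(f|X) . E(conj g|X) ||_{L^2(X)}^2, *)
(* with f = f1 + i f2, g = g1 + i g2.                                  *)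
Definition mix_defect (R : realType) (T0 : R -> R) (T : R * R -> R * R)
  (f1 f2 g1 g2 : R * R -> R) (n : nat) : \bar R :=
  let F1 := fun z => f1 (iter n T z) in
  let F2 := fun z => f2 (iter n T z) in
  (* T^n f . conj g = P1 + i P2 *)
  let P1 := fun z => F1 z * g1 z + F2 z * g2 z in
  let P2 := fun z => F2 z * g1 z - F1 z * g2 z in
  (* T0^n E(f|X) = a1 + i a2 ;  E(conj g|X) = b1 - i b2 *)
  let a1 := fun x => condX f1 (iter n T0 x) in
  let a2 := fun x => condX f2 (iter n T0 x) in
  let b1 := condX g1 in
  let b2 := condX g2 in
  let D1 := fun x => condX P1 x - (a1 x * b1 x + a2 x * b2 x) in
  let D2 := fun x => condX P2 x - (a2 x * b1 x - a1 x * b2 x) in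
  intX (fun x => D1 x ^+ 2 + D2 x ^+ 2).

Definition mixing_ext (R : realType) (T0 : R -> R) (T : R * R -> R * R) : Prop :=
  forall f1 f2 g1 g2, L2ZX f1 f2 -> L2ZX g1 g2 ->
    (fun n => mix_defect T0 T f1 f2 g1 g2 n) @ \oo --> 0%E.

Definition ST0 (R : realType) (T0 : R -> R) : set (R * R -> R * R) :=
  [set T | GT0 T0 T /\ mixing_ext T0 T].

From Pilot Require Import Defs.
From HB Require Import structures.
From mathcomp Require Import all_boot all_order all_algebra.
From mathcomp Require Import all_classical all_reals all_analysis.
From mathcomp Require Import measurable_realfun ring lra.
Set Implicit Arguments. Unset Strict Implicit. Unset Printing Implicit Defensive.
Import Order.TTheory GRing.Theory Num.Theory.
Local Open Scope classical_set_scope.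
Local Open Scope ring_scope.

(* Test the mixing condition on the single function [h], equal to 1 below the line
   [y = 1/2] and to -1 above it.  As [E(h|X) = 0], the mixing defect of
   [(h, h)] at time [n] is the sign correlation
     [C(T^n) = ||E(h o T^n . h | X)||^2 = int_X (1 - 2 nu((T^-n A + A)_x))^2],
   where [A] is the lower half square, so [C(T^n) -> 0] for every mixing extension and
   [S_T0] lies in the union of the sets [N_K = {T : C(T^n) <= 1/2 for all n >= K}].
   Since [C(T^n) <= C(T'^n) + 4 mu(T^-n A + T'^-n A)], each set [{T : C(T^n) > 1/2}]
   is weakly open.  For a rigid [T], [h o T^n] is close to [h] along the rigidity
   times, i.e. [mu(T^-n A + A)] is small, which forces [C(T^n) > 1/2] for arbitrarily
   large [n].  Hence every rigid extension has a neighbourhood missing [N_K], and the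
   density of rigid extensions makes each [N_K] nowhere dense. *)

Lemma setY_triangle (T : Type) (A B C : set T) : A `+` C `<=` (A `+` B) `|` (B `+` C).
Proof. by move=> x /=; case: (pselect (B x)); tauto. Qed.

Lemma wnowhere_dense_avoided d (W : measurableType d) (R : realType)
    (mu : set W -> \bar R) (G D A : set (W -> W)) :
  wdense mu G D ->
  (forall T, D T -> G T -> exists2 V, Defs.wopen mu G V & V T /\ V `&` A = set0) ->
  wnowhere_dense mu G A.
Proof.
move=> denseD avoidA; apply/seteqP; split=> // T [U [openU [UT Ucl]]].
have [_ clD] := denseD T (openU.1 T UT).
have [T' [UT' [DT' GT']]] := clD U openU UT.
have [V openV [VT' VA0]] := avoidA T' DT' GT'.
have [_ clA] := Ucl T' UT'.
have [T'' [VT'' [AT'' _]]] := clA V openV VT'.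
have : (V `&` A) T'' by [].
by rewrite VA0.
Qed.

Section measure_preserving.
Context d (W : measurableType d) (R : realType) (mu : {measure set W -> \bar R}).
Implicit Types (T S : W -> W) (A B C : set W).

Lemma measurable_preimageT T A :
  measurable_fun setT T -> measurable A -> measurable (T @^-1` A).
Proof. by move=> mT mA; rewrite -[_ @^-1` _]setTI; exact: mT. Qed.

Lemma measurableY A B : measurable A -> measurable B -> measurable (A `+` B).
Proof. by move=> mA mB; apply: measurableU; exact: measurableD. Qed.

Lemma mnull_le N A B : measurable A -> measurable B -> mnull mu N ->
  A `<=` B `|` N -> (mu A <= mu B)%E.
Proof.
move=> mA mB [M [mM [M0 NM]]] ABN.
have ABM : A `<=` B `|` M by move=> w /ABN [|/NM]; [left|right].
apply: (@le_trans _ _ (mu (B `|` M))).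
  by apply: le_measure ABM; rewrite inE //; exact: measurableU.
by rewrite -[leRHS]adde0 -M0; exact: measureU2.
Qed.

Lemma mpreserving_iter T n : mpreserving mu T -> mpreserving mu (iter n T).
Proof.
move=> [mT pT]; elim: n => [|n [mTn pTn]] /=; first by split=> //; exact: measurable_id.
split; first exact: measurableT_comp.
by move=> A mA; rewrite -(pT A mA) -(pTn (T @^-1` A)) //; exact: measurable_preimageT.
Qed.

Lemma preimage_iterS T n A : iter n.+1 T @^-1` A = T @^-1` (iter n T @^-1` A).
Proof. by apply/funext => w; rewrite /preimage /= -iterSr. Qed.

(* As inverses mod 0, [S] and [S'] give [S ^-1 E = C] and [T' ^-1 (S' ^-1 E) = E]
   up to null sets, where [E = T ^-1 C]; then use that [T'] preserves [mu]. *)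
Lemma setY_preimage_le T T' S S' C :
  mpreserving mu T -> mpreserving mu T' -> ae_inverse mu T S -> ae_inverse mu T' S' ->
  measurable C ->
  (mu (T @^-1` C `+` T' @^-1` C) <=
   mu (S' @^-1` (T @^-1` C) `+` S @^-1` (T @^-1` C)))%E.
Proof.
move=> [mT _] [mT' pT'] [[mS _] nullS] [[mS' _] nullS'] mC.
set E := T @^-1` C.
have mE : measurable E by exact: measurable_preimageT.
have mSE : measurable (S @^-1` E) by exact: measurable_preimageT.
have mS'E : measurable (S' @^-1` E) by exact: measurable_preimageT.
have mT'C : measurable (T' @^-1` C) by exact: measurable_preimageT.
apply: (@le_trans _ _ (mu (T' @^-1` (S' @^-1` E `+` C)))).
  apply: (mnull_le (measurableY mE mT'C) _ nullS').
    by apply: measurable_preimageT => //; exact: measurableY.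
  move=> w ETw; have [|/not_orP[/contrapT S'T'w _]] :=
    pselect (S' (T' w) <> w \/ T' (S' w) <> w); first by right.
  by left; rewrite /preimage /= S'T'w.
rewrite pT'; last exact: measurableY.
apply: (mnull_le (measurableY mS'E mC) (measurableY mS'E mSE) nullS).
move=> w S'EC; have [|/not_orP[_ /contrapT TSw]] :=
  pselect (S (T w) <> w \/ T (S w) <> w); first by right.
by left; rewrite /preimage /E /= TSw.
Qed.

Lemma wnbhd_iter_setY_le T T' B n (eps : R) :
  inG mu T -> inG mu T' -> measurable B ->
  wnbhd mu T n (fun j => T @^-1` (iter j T @^-1` B)) eps T' ->
  (mu (iter n T @^-1` B `+` iter n T' @^-1` B) <= (n%:R * eps)%:E)%E.
Proof.
move=> [pT _] [pT' _] mB nbT'.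
have mTB j : measurable (iter j T @^-1` B).
  exact: measurable_preimageT (mpreserving_iter j pT).1 mB.
have mT'B j : measurable (iter j T' @^-1` B).
  exact: measurable_preimageT (mpreserving_iter j pT').1 mB.
suff: forall m, (m <= n)%N ->
    (mu (iter m T @^-1` B `+` iter m T' @^-1` B) <= (m%:R * eps)%:E)%E by apply.
elim=> [_|m IH mn].
  by rewrite mul0r -[iter 0 T @^-1` B]/(iter 0 T' @^-1` B) setYK measure0.
rewrite !preimage_iterS.
set C := iter m T @^-1` B; set C' := iter m T' @^-1` B.
have mTC := measurable_preimageT pT.1 (mTB m).
have mT'C := measurable_preimageT pT'.1 (mTB m).
have mT'C' := measurable_preimageT pT'.1 (mT'B m).
apply: (@le_trans _ _ (mu (T @^-1` C `+` T' @^-1` C) + mu (T' @^-1` (C `+` C')))%E).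
  apply: le_trans (measureU2 mu (measurableY mTC mT'C) (measurableY mT'C mT'C')).
  apply: le_measure; rewrite ?inE; last exact: setY_triangle.
    exact: measurableY.
  by apply: measurableU; exact: measurableY.
rewrite pT'.2; last exact: measurableY (mTB m) (mT'B m).
rewrite -nat1r mulrDl mul1r EFinD; apply: leeD; last exact: IH (ltnW mn).
have [S [S' [invS [invS' lt_eps]]]] := nbT' m mn.
by apply: le_trans (ltW lt_eps); exact: setY_preimage_le pT pT' invS invS' (mTB m).
Qed.

Lemma wopen_superlevel (G : set (W -> W)) (Phi : (W -> W) -> \bar R) B n (k a : R) :
  G `<=` inG mu -> measurable B -> 0 <= k ->
  (forall T, G T -> Phi T \is a fin_num) ->
  (forall T T', G T -> G T' ->
    (Phi T <= Phi T' + k%:E * mu (iter n T @^-1` B `+` iter n T' @^-1` B))%E) ->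
  Defs.wopen mu G [set T | G T /\ (a%:E < Phi T)%E].
Proof.
move=> GinG mB k0 Phi_fin Phi_le; split=> [T []//|T [GT aPhiT]].
have ar : a < fine (Phi T) by rewrite -lte_fin fineK ?Phi_fin.
have [eps [eps_gt0 keps]] : exists eps, 0 < eps /\ k * (n%:R * eps) < fine (Phi T) - a.
  have kn1 : 0 < k * n%:R + 1 by have := mulr_ge0 k0 (ler0n R n); lra.
  have := mulfVK (lt0r_neq0 kn1) (fine (Phi T) - a).
  set eps := _ / _ => epsE; exists eps.
  have eps_gt0 : 0 < eps by apply: divr_gt0; lra.
  by split=> //; nra.
exists n, (fun j => T @^-1` (iter j T @^-1` B)), eps; split.
  move=> j _; have [pT _] := GinG T GT.
  exact: measurable_preimageT pT.1 (measurable_preimageT (mpreserving_iter j pT).1 mB).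
split=> // T' [GT' nbT']; split=> //.
have dist := wnbhd_iter_setY_le (GinG T GT) (GinG T' GT') mB nbT'.
have k0E : (0 <= k%:E)%E by rewrite lee_fin.
have := le_trans (Phi_le T T' GT GT') (leeD2l _ (lee_wpmul2l k0E dist)).
rewrite -EFinM -(fineK (Phi_fin T GT)) -(fineK (Phi_fin T' GT')) -EFinD !lee_fin lte_fin.
lra.
Qed.

End measure_preserving.

Lemma ge0_integral_le_addZ d (T : measurableType d) (R : realType)
    (mu : {measure set T -> \bar R}) (D : set T) (f g h : T -> R) (k : R) :
  measurable D -> measurable_fun D f -> measurable_fun D g -> measurable_fun D h ->
  0 <= k -> (forall x, D x -> 0 <= f x) -> (forall x, D x -> 0 <= g x) ->
  (forall x, D x -> 0 <= h x) -> (forall x, D x -> f x <= g x + k * h x) ->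
  (\int[mu]_(x in D) (f x)%:E <=
   \int[mu]_(x in D) (g x)%:E + k%:E * \int[mu]_(x in D) (h x)%:E)%E.
Proof.
move=> mD mf mg mh k0 f0 g0 h0 fgh.
have mE (u : T -> R) : measurable_fun D u -> measurable_fun D (fun x => (u x)%:E).
  by move=> mfu; exact/measurable_EFinP.
have mkh : measurable_fun D (fun x => k * h x).
  by apply: measurable_funM => //; exact: measurable_cst.
have kh0 x : D x -> 0 <= k * h x by move/h0; exact: mulr_ge0.
rewrite -ge0_integralZl_EFin //; last exact: mE.
under [X in (_ + X)%E]eq_integral do rewrite -EFinM.
rewrite -ge0_integralD //; [|exact: mE..].
apply: ge0_le_integral => //; first exact: mE.
by apply: emeasurable_funD; exact: mE.
Qed.

Section unit_square.
Variable R : realType.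
Notation lam := (@lebesgue_measure R).

Lemma measurable_Iu : measurable (@Iu R).
Proof. exact: measurable_itv. Qed.

Lemma lebesgue_Iu : lam (@Iu R) = 1%E.
Proof. by rewrite /Iu lebesgue_measure_itv /= lte_fin ltr01 oppr0 adde0. Qed.

Let measurable_square : measurable (@Iu R `*` @Iu R).
Proof. exact: measurableX measurable_Iu measurable_Iu. Qed.

Let muZ : {measure set _ -> \bar R} := mrestr (lam \x lam)%E measurable_square.

Let mZ0 : @mZ R set0 = 0%E.
Proof. exact: (measure0 muZ). Qed.

Let mZ_ge0 (A : set (R * R)) : (0 <= mZ A)%E.
Proof. exact: (measure_ge0 muZ). Qed.

Let mZ_semi_sigma_additive : semi_sigma_additive (@mZ R).
Proof.
by move=> F mF tF mUF; exact: (@measure_semi_sigma_additive _ _ _ muZ F mF tF mUF).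
Qed.

(* [mZ] is [mrestr (lam \x lam)] carried by the default measurable structure of
   [R * R]; declaring it a measure makes the general lemmas above apply to it. *)
HB.instance Definition _ :=
  isMeasure.Build _ (R * R)%type R (@mZ R) mZ0 mZ_ge0 mZ_semi_sigma_additive.

(* [fibre W x] is [E(1_W | X)(x)]. *)
Definition fibre (W : set (R * R)) (x : R) : R := fine (lam (xsection W x `&` @Iu R)).

Lemma lebesgue_setI_Iu_le1 A : measurable A -> (lam (A `&` @Iu R) <= 1)%E.
Proof.
move=> mA; rewrite -lebesgue_Iu; apply: le_measure; last exact: subIsetr.
  by rewrite inE; exact: measurableI mA measurable_Iu.
by rewrite inE; exact: measurable_Iu.
Qed.

Lemma fibreE W x : measurable W -> (fibre W x)%:E = lam (xsection W x `&` @Iu R).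
Proof.
move=> mW; have Wx_le1 := lebesgue_setI_Iu_le1 (measurable_xsection x mW).
by rewrite fineK // ge0_fin_numE //; exact: le_lt_trans Wx_le1 (ltry _).
Qed.

Lemma fibre_ge0 W x : 0 <= fibre W x.
Proof. exact/fine_ge0/measure_ge0. Qed.

Lemma fibre_le1 W x : measurable W -> fibre W x <= 1.
Proof.
move=> mW; rewrite -lee_fin fibreE //.
exact: lebesgue_setI_Iu_le1 (measurable_xsection x mW).
Qed.

Lemma measurable_fibre W : measurable W -> measurable_fun setT (fibre W).
Proof.
move=> mW; apply: (measurableT_comp (fine_measurable _)) => //.
have -> : (fun x => lam (xsection W x `&` @Iu R)) = lam \o xsection (W `&` (setT `*` @Iu R)).
  by apply/funext => x; rewrite /= xsectionI setTX xsection_preimage_snd.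
apply: measurable_fun_xsection; apply: measurableI => //.
exact: measurableX measurable_Iu.
Qed.

Lemma fibre_le_add X Y Z x : measurable X -> measurable Y -> measurable Z ->
  X `<=` Y `|` Z -> fibre X x <= fibre Y x + fibre Z x.
Proof.
move=> mX mY mZ XYZ; rewrite -lee_fin EFinD !fibreE //.
have mI A : measurable A -> measurable (xsection A x `&` @Iu R).
  by move=> mA; apply: measurableI measurable_Iu; exact: measurable_xsection.
apply: le_trans (measureU2 lam (mI _ mY) (mI _ mZ)).
apply: le_measure; rewrite ?inE; [exact: mI|by apply: measurableU; exact: mI|].
by move=> y [/xsectionP /XYZ [Yxy|Zxy] Iy]; [left|right]; split=> //; exact/xsectionP.
Qed.

Lemma mZ_fibre W : measurable W -> mZ W = (\int[lam]_(x in @Iu R) (fibre W x)%:E)%E.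
Proof.
move=> mW; rewrite /mZ /product_measure1 /= [RHS]integral_mkcond.
apply: eq_integral => x _; rewrite /patch xsectionI.
case: ifPn => xI; first by rewrite fibreE // in_xsectionX.
by rewrite notin_xsectionX // setI0 measure0.
Qed.

Lemma condX_sign (V : set (R * R)) x : measurable V ->
  condX (fun z => 1 - 2 * \1_V z) x = 1 - 2 * fibre V x.
Proof.
move=> mV; have mVx : measurable (xsection V x) := measurable_xsection x mV.
have bounded_integrable (f : R -> R) (c : R) : measurable_fun (@Iu R) f ->
    (forall y, `|f y| <= c) -> lam.-integrable (@Iu R) (EFin \o f).
  move=> mf fc; apply: measurable_bounded_integrable => //; first exact: measurable_Iu.
    by change (lam (@Iu R) < +oo)%E; rewrite lebesgue_Iu ltry.
  by exists c; split; [exact: num_real|move=> M cM y _; exact: le_trans (fc y) (ltW cM)].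
have indic_le1 y : `|\1_(xsection V x) y| <= 1 :> R.
  by rewrite indicE; case: (_ \in _); rewrite ?normr1 ?normr0.
rewrite /condX.
under eq_Rintegral do rewrite indicE -mem_xsection -indicE.
rewrite RintegralB //; last 3 first.
- exact: measurable_Iu.
- by apply: (bounded_integrable _ 1) => [|y]; [exact: measurable_cst|rewrite normr1].
- apply: (bounded_integrable _ 2) => [|y].
    by apply: measurable_funM; [exact: measurable_cst|exact: measurable_indic].
  by rewrite normrM ger0_norm // -[leRHS]mulr1 ler_wpM2l.
rewrite Rintegral_cst; last exact: measurable_itv.
rewrite [X in 1 * X](_ : _ = 1); last exact: (congr1 fine lebesgue_Iu).
rewrite mul1r RintegralZl; first last.
- exact: (bounded_integrable _ 1 (measurable_indic mVx)).
- exact: measurable_itv.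
rewrite /Rintegral integral_indic //; exact: measurable_itv.
Qed.

Definition lower_half : set (R * R) := [set z | z.2 < 2^-1].

Definition half_sign (z : R * R) : R := 1 - 2 * \1_(~` lower_half) z.

Definition sign_change (f : R * R -> R * R) := f @^-1` lower_half `+` lower_half.

Lemma measurable_lower_half : measurable lower_half.
Proof.
rewrite (_ : lower_half = setT `*` [set` `]-oo, 2^-1[%R]); first exact: measurableX.
by apply/seteqP; split=> -[x y] /=; rewrite in_itv /= => -[].
Qed.

Lemma measurable_sign_change f : measurable_fun setT f -> measurable (sign_change f).
Proof.
move=> mf; apply: measurableY measurable_lower_half.
exact: measurable_preimageT mf measurable_lower_half.
Qed.

Lemma half_sign_sqr z : half_sign z ^+ 2 = 1.
Proof. by rewrite /half_sign indicE; case: (_ \in _) => /=; ring. Qed.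

Lemma half_sign_mul f z :
  half_sign (f z) * half_sign z = 1 - 2 * \1_(sign_change f) z.
Proof.
rewrite /half_sign /sign_change !indicE !in_setC in_setU !in_setD.
rewrite -[z \in f @^-1` _]/(f z \in lower_half).
by case: (f z \in _); case: (z \in _) => /=; ring.
Qed.

Lemma half_sign_sub_sqr f z :
  (half_sign (f z) - half_sign z) ^+ 2 = 4 * \1_(sign_change f) z.
Proof. by rewrite sqrrB !half_sign_sqr half_sign_mul; ring. Qed.

Lemma fibre_upper_half x : fibre (~` lower_half) x = 2^-1.
Proof.
rewrite /fibre (_ : _ `&` _ = [set` `[2^-1, 1]%R]).
  rewrite lebesgue_measure_itv /= lte_fin invf_lt1 ?ltr1n //=.
  lra.
apply/seteqP; split=> y /=; rewrite /Iu /= !in_itv /=.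
  by case=> /xsectionP Ny /andP[_ y1]; rewrite y1 andbT leNgt; exact/negP.
move=> /andP[h1 h2]; split; first by apply/xsectionP/negP; rewrite -leNgt.
by rewrite h2 andbT (le_trans _ h1) // invr_ge0 ler0n.
Qed.

Lemma condX_half_sign x : condX half_sign x = 0.
Proof.
rewrite condX_sign ?fibre_upper_half; first lra.
exact: measurableC measurable_lower_half.
Qed.

Lemma condX0 (x : R) : condX (fun=> 0) x = 0.
Proof. by rewrite /condX Rintegral_cst ?mul0r //; exact: measurable_itv. Qed.

Lemma measurable_half_sign : measurable_fun setT half_sign.
Proof.
apply: measurable_funB; first exact: measurable_cst.
apply: measurable_funM; first exact: measurable_cst.
exact: measurable_indic (measurableC measurable_lower_half).
Qed.

Lemma integral_Iu1 : (\int[lam]_(x in @Iu R) (1%R)%:E)%E = 1%E.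
Proof. by rewrite integral_cst ?mul1e; [exact: lebesgue_Iu|exact: measurable_itv]. Qed.

(* [C(f) = ||E(h o f . h | X)||^2] in [L^2(X)] for [h = half_sign]. *)
Definition sign_correlation (f : R * R -> R * R) : \bar R :=
  (\int[lam]_(x in @Iu R) ((1 - 2 * fibre (sign_change f) x) ^+ 2)%:E)%E.

Lemma mix_defect_half_sign (T0 : R -> R) T n : measurable_fun setT (iter n T) ->
  mix_defect T0 T half_sign (fun=> 0) half_sign (fun=> 0) n = sign_correlation (iter n T).
Proof.
move=> mTn; rewrite /mix_defect /intX /sign_correlation.
apply: eq_integral => x _; rewrite !condX_half_sign !condX0.
rewrite (_ : (fun z => _ * _ + 0 * 0) = fun z => 1 - 2 * \1_(sign_change (iter n T)) z);
  last first.
  by apply/funext => z; rewrite mulr0 addr0 half_sign_mul.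
rewrite (_ : (fun z => 0 * _ - _ * 0) = fun=> 0); last first.
  by apply/funext => z; rewrite mulr0 mul0r subr0.
rewrite condX0 condX_sign; last exact: measurable_sign_change.
by congr (_%:E); ring.
Qed.

Lemma measurable_sign_defect f : measurable_fun setT f ->
  measurable_fun (@Iu R) (fun x => (1 - 2 * fibre (sign_change f) x) ^+ 2).
Proof.
move=> mf; apply/measurable_funTS/measurable_funX/measurable_funB; first exact: measurable_cst.
apply: measurable_funM; first exact: measurable_cst.
exact: measurable_fibre (measurable_sign_change mf).
Qed.

Lemma sign_correlation_fin_num f :
  measurable_fun setT f -> sign_correlation f \is a fin_num.
Proof.
move=> mf; rewrite ge0_fin_numE; last by apply: integral_ge0 => x _; rewrite lee_fin sqr_ge0.
apply: le_lt_trans (ltry 1); rewrite -integral_Iu1.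
apply: ge0_le_integral => //; [exact: measurable_itv|by move=> x _; rewrite lee_fin sqr_ge0| |].
  by apply/measurable_EFinP; exact: measurable_sign_defect.
move=> x _; have := fibre_ge0 (sign_change f) x.
have := fibre_le1 x (measurable_sign_change mf); rewrite lee_fin; nra.
Qed.

Lemma sign_correlation_le f g : measurable_fun setT f -> measurable_fun setT g ->
  (sign_correlation f <=
   sign_correlation g + 4%:E * mZ (f @^-1` lower_half `+` g @^-1` lower_half))%E.
Proof.
move=> mf mg; set D := _ `+` _.
have mD : measurable D.
  by apply: measurableY; apply: measurable_preimageT measurable_lower_half.
have mSf := measurable_sign_change mf; have mSg := measurable_sign_change mg.
rewrite mZ_fibre //; apply: ge0_integral_le_addZ => //.
- exact: measurable_itv.
- exact: measurable_sign_defect.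
- exact: measurable_sign_defect.
- exact: measurable_funTS (measurable_fibre mD).
- by move=> x _; exact: sqr_ge0.
- by move=> x _; exact: sqr_ge0.
- by move=> x _; exact: fibre_ge0.
move=> x _.
have fg : fibre (sign_change f) x <= fibre (sign_change g) x + fibre D x.
  by apply: fibre_le_add => //; rewrite setUC; exact: setY_triangle.
have gf : fibre (sign_change g) x <= fibre (sign_change f) x + fibre D x.
  by apply: fibre_le_add => //; rewrite setUC /D setYC; exact: setY_triangle.
have := fibre_ge0 (sign_change f) x; have := fibre_le1 x mSf.
have := fibre_ge0 (sign_change g) x; have := fibre_le1 x mSg.
have := fibre_ge0 D x; nra.
Qed.

Lemma sign_correlation_ge f : measurable_fun setT f ->
  (1 <= sign_correlation f + 4%:E * mZ (sign_change f))%E.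
Proof.
move=> mf; have mS := measurable_sign_change mf.
rewrite -integral_Iu1 mZ_fibre //; apply: ge0_integral_le_addZ => //.
- exact: measurable_itv.
- exact: measurable_sign_defect.
- exact: measurable_funTS (measurable_fibre mS).
- by move=> x _; exact: sqr_ge0.
- by move=> x _; exact: fibre_ge0.
by move=> x _; have := fibre_ge0 (sign_change f) x; nra.
Qed.

Lemma intZ_half_sign f : measurable_fun setT f ->
  intZ (fun z => (half_sign (f z) - half_sign z) ^+ 2 + (0 - 0) ^+ 2) =
  (4%:E * mZ (sign_change f))%E.
Proof.
move=> mf; rewrite /intZ.
under eq_integral do rewrite subrr [0 ^+ 2]expr2 mulr0 addr0 half_sign_sub_sqr EFinM.
have mS := measurable_sign_change mf.
rewrite ge0_integralZl_EFin //; last by apply/measurable_EFinP; exact: measurable_indic mS.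
by rewrite integral_indic.
Qed.

Lemma L2Z_half_sign : L2Z half_sign (fun=> 0).
Proof.
split; first exact: measurable_half_sign.
split; first exact: measurable_cst.
rewrite /intZ (eq_integral (fun=> 1%E)); last first.
  by move=> z _; rewrite half_sign_sqr expr2 mulr0 addr0.
have square_finite : ((lam \x lam) (@Iu R `*` @Iu R) < +oo)%E.
  have lam2_finite : (lam (@Iu R) * lam (@Iu R) < +oo)%E by rewrite lebesgue_Iu mul1e ltry.
  by rewrite product_measure1E //; exact: measurable_itv.
by rewrite integral_cst // mul1e.
Qed.

Lemma L2ZX_half_sign : L2ZX half_sign (fun=> 0).
Proof.
split; first exact: measurable_half_sign.
split; first exact: measurable_cst.
exists 1; apply: aeW => x _; rewrite -[leRHS]integral_Iu1 le_eqVlt; apply/orP; left.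
by apply/eqP/eq_integral => y _; rewrite half_sign_sqr expr2 mulr0 addr0.
Qed.

Lemma wopen_sign_correlation_gt (T0 : R -> R) (n : nat) (a : R) :
  Defs.wopen (@mZ R) (GT0 T0) [set T | GT0 T0 T /\ (a%:E < sign_correlation (iter n T))%E].
Proof.
have mTn T : GT0 T0 T -> measurable_fun setT (iter n T).
  by move=> [[pT _] _]; exact: (mpreserving_iter n pT).1.
apply: (@wopen_superlevel _ _ _ _ _ (fun T => sign_correlation (iter n T)) lower_half n 4).
- by move=> T [].
- exact: measurable_lower_half.
- by [].
- by move=> T /mTn; exact: sign_correlation_fin_num.
- by move=> T T' /mTn mT /mTn mT'; exact: sign_correlation_le.
Qed.

Lemma rigid_sign_correlation_gt T K : RZ T ->
  exists2 n, (K <= n)%N & ((2^-1)%:E < sign_correlation (iter n T))%E.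
Proof.
move=> [[pT _] [s [s_incr s_rigid]]].
have mTn n : measurable_fun setT (iter n T) := (mpreserving_iter n pT).1.
have s_ge k : (k <= s k)%N by elim: k => // k IH; exact: leq_ltn_trans IH (s_incr k).
have quarter_gt0 : 0 < 4^-1 :> R by rewrite invr_gt0 ltr0n.
have [K' _ small] :=
  s_rigid _ _ L2Z_half_sign _ (nbhs_open_ereal_lt (r := 0) (f := fun=> 4^-1) quarter_gt0).
exists (s (maxn K K')); first exact: leq_trans (leq_maxl K K') (s_ge _).
have := small _ (leq_maxr K K'); rewrite /= intZ_half_sign //.
have := sign_correlation_ge (mTn (s (maxn K K'))).
set c := sign_correlation _; set m := (4%:E * _)%E => ge1 m_small.
rewrite ltNge; apply/negP => c_le_half.
have := le_lt_trans ge1 (lee_ltD (sign_correlation_fin_num (mTn _)) c_le_half m_small).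
rewrite -EFinD lte_fin; lra.
Qed.

Lemma mixing_sign_correlation_cvg (T0 : R -> R) T : GT0 T0 T -> mixing_ext T0 T ->
  sign_correlation (iter n T) @[n --> \oo] --> 0%E.
Proof.
move=> [[pT _] _] mixT.
suff <- : (fun n => mix_defect T0 T half_sign (fun=> 0) half_sign (fun=> 0) n) =
          (fun n => sign_correlation (iter n T)).
  exact: mixT L2ZX_half_sign L2ZX_half_sign.
by apply/funext => n; rewrite mix_defect_half_sign //; exact: (mpreserving_iter n pT).1.
Qed.

End unit_square.

Theorem lemma3p2 (R : realType) (T0 : R -> R) :
  inG (@mI R) T0 ->
  wdense (@mZ R) (GT0 T0) (@RZ R `&` GT0 T0) ->
  wfirst_category (@mZ R) (GT0 T0) (ST0 T0).
Proof.
(* The argument does not use that [T0] is measure preserving. *)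
move=> _ rigid_dense; split=> [T []//|].
pose N K := [set T | GT0 T0 T /\
  forall n, (K <= n)%N -> (sign_correlation (iter n T) <= (2^-1)%:E)%E].
exists N; split=> [K|T [GT mixT]].
  apply: (wnowhere_dense_avoided rigid_dense) => T [rigidT _] GT.
  have [n Kn gt_half] := rigid_sign_correlation_gt K rigidT.
  exists [set T' | GT0 T0 T' /\ ((2^-1)%:E < sign_correlation (iter n T'))%E].
    exact: wopen_sign_correlation_gt.
  split=> //; apply/seteqP; split=> // T' [[_ gt_half'] [_ le_half]].
  by have := lt_le_trans gt_half' (le_half n Kn); rewrite ltxx.
have half_gt0 : 0 < 2^-1 :> R by rewrite invr_gt0 ltr0n.
have [K _ le_half] := mixing_sign_correlation_cvg GT mixT
  (nbhs_open_ereal_lt (r := 0) (f := fun=> 2^-1) half_gt0).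
by exists K => //; split=> // n Kn; exact/ltW/le_half.
Qed.
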